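(* Let $q$ be a power of an odd prime with $q\equiv1\pmod 4$, $t=\frac{q-1}{4}$, $T$ a generator of $\widehat{\mathbb F_q^{\times}}$, and $\lambda\in\mathbb F_q^\times$. Then $$\frac{12}{q-1}\sum_{j=0}^{q-2}\frac{g(T^{j})\,g(T^{t+j})^2\,g(T^{2t+j})}{g(T^{4j})}\,T^{4j}(4\lambda)=12q\,T^t(-1)\left(T^{2t}(1-\lambda^4)-1\right).$$
   Context: Characters are extended by $\chi(0)=0$. With $\mathrm{tr}:\mathbb F_q\to\mathbb F_p$ the trace, $\zeta$ a fixed primitive $p$-th root of unity and $\theta(x)=\zeta^{\mathrm{tr}(x)}$, the Gauss sum is $g(\chi)=\sum_{x\in\mathbb F_q}\chi(x)\theta(x)$ (so $g$ of the trivial character is $-1$). *)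

From HB Require Import structures.
From mathcomp Require Import all_boot all_order all_algebra all_field.
Set Implicit Arguments. Unset Strict Implicit. Unset Printing Implicit Defensive.
Import Order.TTheory GRing.Theory Num.Theory.
Local Open Scope ring_scope.

Section Defs.
Variable F : finFieldType.

Definition is_mchar (chi : F -> algC) : Prop :=
  [/\ chi 0 = 0, chi 1 = 1 & forall x y : F, chi (x * y) = chi x * chi y].

(* The j-th power of a character in the character group (extended by 0 at 0;
   in particular chi^0 is the trivial character, which vanishes at 0). *)
Definition mchar_pow (chi : F -> algC) (j : nat) : F -> algC :=
  fun x => if x == 0 then 0 else chi x ^+ j.

Definition mchar_generator (T : F -> algC) : Prop :=
  is_mchar T /\
  forall chi, is_mchar chi -> exists j : nat, forall x, chi x = mchar_pow T j x.

(* Absolute trace F_q -> F_p, where q = p ^ n, as an element of F. *)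
Definition ftrace (p : nat) (x : F) : F :=
  \sum_(i < logn p #|F|) x ^+ (p ^ i).

(* The trace as a residue in {0,..,p-1} (its image in the prime field). *)
Definition ftrace_nat (p : nat) (x : F) : nat :=
  if [pick k : 'I_p | (k%:R : F) == ftrace p x] is Some k then val k else 0%N.

Definition theta (p : nat) (zeta : algC) (x : F) : algC := zeta ^+ ftrace_nat p x.

Definition gauss (p : nat) (zeta : algC) (chi : F -> algC) : algC :=
  \sum_(x : F) chi x * theta p zeta x.

End Defs.

From Pilot Require Import Defs.
From HB Require Import structures.
From mathcomp Require Import all_boot all_algebra all_field.
From mathcomp Require Import cyclic ring zify.
Import GRing.Theory Num.Theory.
Local Open Scope ring_scope.
Set Implicit Arguments. Unset Strict Implicit. Unset Printing Implicit Defensive.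

(* Let n = q - 1, t = n / 4 and h = n / 2 = 2 t, so that T^h is the quadratic
   character, and write g(a), J(a, b) for the Gauss and Jacobi sums of T^a, T^b.
   Two identities drive the computation: g(a) g(b) = J(a, b) g(a + b)
   whenever T^(a+b) is nontrivial, and the Hasse-Davenport duplication
   T^a(4) g(a) g(a + h) = g(h) g(2 a), which follows from T^a(4) J(a, a) = J(h, a)
   (substitute x = (1 + s) / 2 in the Jacobi sum).  Applied at a = j and a = 2 j,
   together with g(h)^2 = q and T^t(4) T^t(-1) = 1 (both use q = 1 mod 4), they
   turn the j-th summand, whenever T^(4j) is nontrivial, into
   q T^t(-1) J(h, j + t) T^(j+t)(lambda^4).  Of the four indices with T^(4j)
   trivial only j = t deviates from this formula, by q T^t(-1) (1 - q).  Summing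
   over j, orthogonality gives sum_s J(h, s) T^s(lambda^4) = n T^h(1 - lambda^4),
   and the defect at j = t produces the -1. *)

Lemma sum_indicator (R : pzSemiRingType) (I : finType) (y : I) (f : I -> R) :
  \sum_x (x == y)%:R * f x = f y.
Proof.
rewrite (bigD1 y) //= eqxx mul1r big1 ?addr0 // => x /negbTE->.
by rewrite mul0r.
Qed.

Lemma sum_ord_indicator (R : pzSemiRingType) m k (f : nat -> R) : (k < m)%N ->
  \sum_(j < m) ((j : nat) == k)%:R * f j = f k.
Proof.
move=> lt_km; rewrite -(sum_indicator (Ordinal lt_km) (fun j : 'I_m => f j)).
by apply: eq_bigr => j _.
Qed.

Lemma sum_ord_shift (R : nmodType) m k (f : nat -> R) :
  (forall i, f (i + m)%N = f i) -> \sum_(j < m) f (j + k)%N = \sum_(j < m) f j.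
Proof.
move=> f_per; elim: k => [|k IHk]; first by under eq_bigr do rewrite addn0.
case: m f_per IHk => [|m] f_per IHk; first by rewrite !big_ord0.
rewrite -IHk [LHS]big_ord_recr [RHS]big_ord_recl /= addrC.
have -> : f (m + k.+1)%N = f (0 + k)%N by rewrite addnS -addSn addnC f_per.
by congr (_ + _); apply: eq_bigr => j _; rewrite addSnnS.
Qed.

Lemma fixed_mull_eq0 (R : idomainType) (c x : R) : c != 1 -> x = c * x -> x = 0.
Proof.
move=> c_neq1 /eqP; rewrite -subr_eq0 -{1}[x]mul1r -mulrBl mulf_eq0 subr_eq0.
by rewrite eq_sym (negbTE c_neq1) => /eqP.
Qed.

Section GaussSums.
Variables (F : finFieldType) (T : F -> algC).
Hypothesis HT : mchar_generator T.
Local Notation n := (#|F| - 1)%N.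
Local Notation Tp := (mchar_pow T).

(** * Multiplicative characters *)

Lemma card_pred_gt0 : (0 < n)%N.
Proof. by rewrite subn_gt0 finNzRing_gt1. Qed.

Lemma cardF_pred : #|F| = n.+1.
Proof. by rewrite subn1 prednK // ltnW // finNzRing_gt1. Qed.

Lemma natr_card_pred_neq0 : n%:R != 0 :> algC.
Proof. by rewrite pnatr_eq0 -lt0n card_pred_gt0. Qed.

Lemma expf_card_pred (x : F) : x != 0 -> x ^+ n = 1.
Proof.
move=> x_neq0; apply: (mulIf x_neq0).
by rewrite -exprSr -cardF_pred expf_card mul1r.
Qed.

Lemma mchar_gen0 : T 0 = 0. Proof. by case: HT => [[]]. Qed.
Lemma mchar_gen1 : T 1 = 1. Proof. by case: HT => [[]]. Qed.
Lemma mchar_genM x y : T (x * y) = T x * T y. Proof. by case: HT => [[]]. Qed.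

Lemma mchar_genX x k : T (x ^+ k) = T x ^+ k.
Proof. by elim: k => [|k IHk]; rewrite ?mchar_gen1 // !exprS mchar_genM IHk. Qed.

Lemma mchar_pow_at0 j : Tp j 0 = 0.
Proof. by rewrite /mchar_pow eqxx. Qed.

Lemma mchar_powE j x : x != 0 -> Tp j x = T x ^+ j.
Proof. by rewrite /mchar_pow => /negbTE->. Qed.

Lemma mchar_pow_at1 j : Tp j 1 = 1.
Proof. by rewrite mchar_powE ?oner_neq0 // mchar_gen1 expr1n. Qed.

Lemma mchar_powM j x y : Tp j (x * y) = Tp j x * Tp j y.
Proof.
have [->|x_neq0] := eqVneq x 0; first by rewrite mul0r !mchar_pow_at0 mul0r.
have [->|y_neq0] := eqVneq y 0; first by rewrite mulr0 !mchar_pow_at0 mulr0.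
by rewrite !mchar_powE ?mulf_neq0 // mchar_genM exprMn.
Qed.

Lemma mchar_powD a b x : Tp (a + b) x = Tp a x * Tp b x.
Proof.
have [->|x_neq0] := eqVneq x 0; first by rewrite !mchar_pow_at0 mul0r.
by rewrite !mchar_powE // exprD.
Qed.

Lemma mchar_powX k a x : x != 0 -> Tp (k * a) x = Tp a (x ^+ k).
Proof.
by move=> x_neq0; rewrite !mchar_powE ?expf_neq0 // mchar_genX -exprM mulnC.
Qed.

Lemma mchar_pow_dvd j x : (n %| j)%N -> x != 0 -> Tp j x = 1.
Proof.
case/dvdnP=> k -> x_neq0.
by rewrite mulnC mchar_powX // expf_card_pred // mchar_pow_at1.
Qed.

Lemma mchar_pow_addmul j k x : Tp (j + k * n) x = Tp j x.
Proof.
have [->|x_neq0] := eqVneq x 0; first by rewrite !mchar_pow_at0.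
by rewrite mchar_powD (@mchar_pow_dvd (k * n)) ?dvdn_mull ?mulr1.
Qed.

Lemma mchar_pow_neq0 j x : x != 0 -> Tp j x != 0.
Proof.
move=> x_neq0; rewrite mchar_powE // expf_neq0 //; apply/eqP => Tx0.
have := mchar_genX x n; rewrite expf_card_pred // mchar_gen1 Tx0 expr0n.
by rewrite gtn_eqF ?card_pred_gt0 //; apply/eqP; rewrite oner_eq0.
Qed.

Lemma mchar_pow_sqr_neg1 j : Tp j (-1) * Tp j (-1) = 1.
Proof. by rewrite -mchar_powM mulrNN mulr1 mchar_pow_at1. Qed.

Lemma finField_prim_root : {x0 : F | n.-primitive_root x0}.
Proof.
have: has n.-primitive_root (enum (predC1 (0 : F))).
  apply: has_prim_root; rewrite ?card_pred_gt0 ?enum_uniq //.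
    by apply/allP=> x; rewrite mem_enum unity_rootE => /expf_card_pred->.
  by rewrite -cardE cardC1 subn1.
by case/hasP/sig2W=> x0 _; exists x0.
Qed.

(* A discrete logarithm to the base x0 gives a character which separates
   every x != 1 from 1; since T generates, T separates them as well. *)
Let x0 := sval finField_prim_root.
Let x0_prim : n.-primitive_root x0 := svalP finField_prim_root.

Let dlog (x : F) : nat :=
  if [pick k : 'I_n | x0 ^+ k == x] is Some k then val k else 0%N.

Let dlog_lt x : (dlog x < n)%N.
Proof. by rewrite /dlog; case: pickP => [k _|_]; rewrite ?ltn_ord ?card_pred_gt0. Qed.

Let expr_dlog x : x != 0 -> x0 ^+ dlog x = x.
Proof.
move=> x_neq0; rewrite /dlog; case: pickP => [k /eqP //|no_log].
have [i x_eq] := prim_rootP x0_prim (expf_card_pred x_neq0).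
by have := no_log i; rewrite x_eq eqxx.
Qed.

Let w := sval (C_prim_root_exists card_pred_gt0).
Let w_prim : n.-primitive_root w := svalP (C_prim_root_exists card_pred_gt0).

Let chi (x : F) : algC := if x == 0 then 0 else w ^+ dlog x.

Let chi_mchar : is_mchar chi.
Proof.
split; first by rewrite /chi eqxx.
  rewrite /chi oner_eq0; apply/eqP; rewrite -(prim_order_dvd w_prim).
  by rewrite (prim_order_dvd x0_prim) expr_dlog ?oner_neq0.
move=> x y; rewrite /chi mulf_eq0.
have [->|x_neq0] := eqVneq x 0; first by rewrite /= mul0r.
have [->|y_neq0] := eqVneq y 0; first by rewrite orbT mulr0.
rewrite /= -exprD; apply/eqP; rewrite (eq_prim_root_expr w_prim).
by rewrite -(eq_prim_root_expr x0_prim) exprD !expr_dlog ?mulf_neq0.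
Qed.

Lemma mchar_gen_eq1 x : T x = 1 -> x = 1.
Proof.
move=> Tx1; have x_neq0 : x != 0.
  by apply: contra_eq_neq Tx1 => ->; rewrite mchar_gen0 eq_sym oner_neq0.
case: HT => _ /(_ _ chi_mchar) [j chi_eq].
have := chi_eq x; rewrite /chi mchar_powE // (negbTE x_neq0) Tx1 expr1n => /eqP.
rewrite -(prim_order_dvd w_prim) => /dvdn_leq dlog_le.
have dlog0 : dlog x = 0%N by apply: contraTeq (dlog_lt x); rewrite -leqNgt -lt0n.
by rewrite -(expr_dlog x_neq0) dlog0.
Qed.

Lemma sum_mchar_pow j : \sum_x Tp j x = if (n %| j)%N then n%:R else 0.
Proof.
case: ifP => [n_dvd_j|n_ndvd_j].
  rewrite (bigD1 0) //= mchar_pow_at0 add0r (eq_bigr (fun=> 1)).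
    by rewrite sumr_const cardC1 subn1.
  by move=> x; exact: mchar_pow_dvd.
have x0_neq0 : x0 != 0 by rewrite (prim_root_eq0 x0_prim) -lt0n card_pred_gt0.
have Tx0_neq1 : Tp j x0 != 1.
  apply: contraFneq n_ndvd_j; rewrite mchar_powE // -mchar_genX.
  by move=> /mchar_gen_eq1/eqP; rewrite -(prim_order_dvd x0_prim).
apply: (fixed_mull_eq0 Tx0_neq1).
rewrite [LHS](reindex_inj (mulfI x0_neq0)) mulr_sumr.
by apply: eq_bigr => x _; rewrite mchar_powM.
Qed.

Lemma sum_mchar_pows x : x != 0 -> \sum_(j < n) Tp j x = if x == 1 then n%:R else 0.
Proof.
move=> x_neq0; under eq_bigr => j _ do rewrite mchar_powE //.
have [->|x_neq1] := eqVneq x 1.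
  rewrite mchar_gen1 (eq_bigr (fun=> 1)) ?sumr_const ?card_ord // => j _.
  exact: expr1n.
have := subrX1 (T x) n; rewrite -mchar_genX expf_card_pred // mchar_gen1 subrr.
move/esym/eqP; rewrite mulf_eq0 subr_eq0 => /orP[/eqP/mchar_gen_eq1 x_eq1|/eqP //].
by rewrite x_eq1 eqxx in x_neq1.
Qed.

Lemma mchar_indicator x u : u != 0 ->
  (x == u)%:R = n%:R^-1 * \sum_(j < n) Tp j x * Tp j u^-1.
Proof.
move=> u_neq0; under eq_bigr do rewrite -mchar_powM.
have [->|x_neq0] := eqVneq x 0.
  by rewrite eq_sym (negbTE u_neq0) big1 ?mulr0 // => j _; rewrite mul0r mchar_pow_at0.
rewrite sum_mchar_pows ?mulf_neq0 ?invr_eq0 // (can2_eq (divfK u_neq0) (mulfK u_neq0)).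
by rewrite mul1r; case: (x == u); rewrite ?mulr0 // mulVf ?natr_card_pred_neq0.
Qed.

(** * The additive character *)

Variables (p : nat) (zeta : algC).
Hypotheses (Hp : prime p) (HpF : p \in [pchar F]) (Hzeta : p.-primitive_root zeta).
Local Notation m := (logn p #|F|).
Local Notation theta := (@theta F p zeta).

Lemma logn_card_gt0 : (0 < m)%N.
Proof.
rewrite lt0n; apply: contraTneq (finNzRing_gt1 F) => m0.
by rewrite (card_pprimeChar HpF) m0.
Qed.

Lemma pchar_natX i : [pchar F].-nat (p ^ i)%N.
Proof. by rewrite (eq_pnat _ (pcharf_eq HpF)) pnatX pnat_id. Qed.

Lemma nat_pchar_inj a b : (a < p)%N -> (b < p)%N -> a%:R = b%:R :> F -> a = b.
Proof.
wlog le_ab : a b / (a <= b)%N.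
  move=> IH lt_ap lt_bp eq_ab; case/orP: (leq_total a b) => le; first exact: IH.
  exact/esym/IH.
move=> _ lt_bp /eqP; rewrite eq_sym -subr_eq0 -natrB // -(dvdn_pcharf HpF) => dvd_p.
apply/eqP; rewrite eqn_leq le_ab /= -subn_eq0 eqn0Ngt; apply/negP => lt_ab.
by have := leq_ltn_trans (leq_subr a b) lt_bp; rewrite ltnNge dvdn_leq.
Qed.

Lemma ftraceD (x y : F) : ftrace p (x + y) = ftrace p x + ftrace p y.
Proof.
rewrite /ftrace -big_split /=; apply: eq_bigr => i _.
by rewrite exprDn_pchar // pchar_natX.
Qed.

Lemma ftrace0 : ftrace p (0 : F) = 0.
Proof. by apply: (addrI (ftrace p 0)); rewrite -ftraceD !addr0. Qed.

Lemma ftrace_frobenius (x : F) : ftrace p x ^+ p = ftrace p x.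
Proof.
have frobD : {morph (fun y : F => y ^+ p) : a b / a + b}.
  by move=> a b /=; rewrite exprDn_pchar // -[p]expn1 pchar_natX.
have frob0 : (0 : F) ^+ p = 0 by rewrite expr0n gtn_eqF // prime_gt0.
rewrite /ftrace (big_morph _ frobD frob0).
under eq_bigr => i _ do rewrite -exprM -expnSr.
have [k m_eq] : exists k, m = k.+1 by exists m.-1; rewrite prednK // logn_card_gt0.
rewrite m_eq big_ord_recr big_ord_recl /= -m_eq -(card_pprimeChar HpF) expf_card.
by rewrite addrC; congr (_ + _); apply: eq_bigr.
Qed.

Lemma natr_frobenius k : (k%:R : F) ^+ p = k%:R.
Proof.
elim: k => [|k IHk]; first by rewrite expr0n gtn_eqF // prime_gt0.
by rewrite -addn1 natrD exprDn_pchar ?IHk ?expr1n // -[p]expn1 pchar_natX.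
Qed.

(* The p-th power map fixes the p images of 0, ..., p - 1, which already
   exhaust the p roots of X^p - X. *)
Lemma frobenius_fixed_nat (y : F) :
  y ^+ p = y -> exists2 k, (k < p)%N & k%:R = y.
Proof.
move=> y_fixed; case: (pickP (fun k : 'I_p => k%:R == y)) => [k /eqP <-|no_k].
  by exists k.
pose P : {poly F} := 'X^p - 'X.
have size_P : size P = p.+1.
  by rewrite /P size_polyDl ?size_polyXn // size_polyN size_polyX ltnS prime_gt1.
have P_neq0 : P != 0 by rewrite -size_poly_eq0 size_P.
pose rs := y :: [seq (val k)%:R : F | k <- enum (ordinal p)].
have := max_poly_roots P_neq0 (rs := rs).
have -> : all (root P) rs.
  rewrite /= rootE /P !hornerE y_fixed subrr eqxx /=.
  by apply/allP => z /mapP[k _ ->]; rewrite rootE !hornerE natr_frobenius subrr.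
have -> : uniq rs.
  rewrite /= map_inj_uniq ?enum_uniq ?andbT.
    by apply/mapP => -[k _ k_eq]; have := no_k k; rewrite -k_eq eqxx.
  by move=> a b /nat_pchar_inj ab; apply/ord_inj/ab.
by rewrite /= size_map size_enum_ord size_P ltnn => /(_ isT isT).
Qed.

Lemma ftrace_natE (x : F) : (ftrace_nat p x)%:R = ftrace p x.
Proof.
rewrite /ftrace_nat; case: pickP => [k /eqP //|no_k].
have [k lt_kp k_eq] := frobenius_fixed_nat (ftrace_frobenius x).
by have := no_k (Ordinal lt_kp); rewrite /= k_eq eqxx.
Qed.

Lemma ftrace_nat_lt (x : F) : (ftrace_nat p x < p)%N.
Proof. by rewrite /ftrace_nat; case: pickP => [k _|_]; rewrite ?ltn_ord ?prime_gt0. Qed.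

Lemma thetaD (x y : F) : theta (x + y) = theta x * theta y.
Proof.
rewrite /Defs.theta -exprD -(prim_expr_mod Hzeta (_ + _)); congr (_ ^+ _).
apply: nat_pchar_inj; rewrite ?ftrace_nat_lt ?ltn_mod ?prime_gt0 //.
by rewrite (GRing.natr_mod_pchar HpF) natrD !ftrace_natE ftraceD.
Qed.

Lemma theta0 : theta 0 = 1.
Proof.
rewrite /Defs.theta (_ : ftrace_nat p (0 : F) = 0%N) //.
by apply: nat_pchar_inj; rewrite ?ftrace_nat_lt ?prime_gt0 // ftrace_natE ftrace0.
Qed.

(* The trace is a polynomial of degree p^(m-1) < #|F|, so it has a non-root. *)
Lemma ftrace_neq0 : exists y : F, ftrace p y != 0.
Proof.
apply/existsP; apply: contraT; rewrite negb_exists => /forallP trace0.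
have [k m_eq] : exists k, m = k.+1 by exists m.-1; rewrite prednK // logn_card_gt0.
pose Q : {poly F} := \sum_(i < m) 'X^(p ^ i).
have coefQ j : Q`_j = \sum_(i < m) (j == p ^ i)%N%:R.
  by rewrite /Q coef_sum; apply: eq_bigr => i _; rewrite coefXn.
have size_Q : (size Q <= (p ^ k).+1)%N.
  apply/leq_sizeP => j le_j; rewrite coefQ big1 // => i _.
  rewrite gtn_eqF //; apply: leq_trans le_j; rewrite ltnS leq_exp2l ?prime_gt1 //.
  by rewrite -ltnS -m_eq.
have Q_neq0 : Q != 0.
  apply/eqP => /(congr1 (fun P : {poly F} => P`_(p ^ k))) /eqP.
  have lt_km : (k < m)%N by rewrite m_eq.
  rewrite coefQ coef0 (bigD1 (Ordinal lt_km)) //= eqxx big1 ?addr0 ?oner_eq0 //.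
  move=> i /eqP i_neq; rewrite eqn_exp2l ?prime_gt1 //; case: eqP => // ik.
  by case: i_neq; apply: ord_inj.
have := max_poly_roots Q_neq0 (rs := enum F).
rewrite enum_uniq -cardE (card_pprimeChar HpF) m_eq.
have -> : all (root Q) (enum F).
  apply/allP => y _; rewrite rootE /Q horner_sum.
  by under eq_bigr => i _ do rewrite hornerXn; exact/negPn/trace0.
move=> /(_ isT isT) /leq_trans /(_ size_Q).
by rewrite ltnS leqNgt ltn_exp2l ?prime_gt1 // ltnSn.
Qed.

Lemma sum_theta : \sum_(x : F) theta x = 0.
Proof.
have [y trace_y] := ftrace_neq0.
have theta_y : theta y != 1.
  rewrite /Defs.theta; apply: contra trace_y; rewrite -(prim_order_dvd Hzeta).
  rewrite -ftrace_natE => /dvdn_leq; case: (ftrace_nat p y) (ftrace_nat_lt y) => //.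
  by move=> k lt_kp /(_ isT); rewrite leqNgt lt_kp.
apply: (fixed_mull_eq0 theta_y).
rewrite [LHS](reindex_inj (addrI y)) mulr_sumr.
by apply: eq_bigr => x _; rewrite thetaD.
Qed.

(** * Gauss and Jacobi sums *)

Local Notation q := #|F|.
Local Notation G a := (gauss p zeta (Tp a)).

Definition jacobi (a b : nat) := \sum_(x : F) Tp a x * Tp b (1 - x).

Lemma natr_card : q%:R = n%:R + 1 :> algC.
Proof. by rewrite {1}cardF_pred -addn1 natrD. Qed.

Lemma natr_card_neq0 : q%:R != 0 :> algC.
Proof. by rewrite pnatr_eq0 -lt0n ltnW // finNzRing_gt1. Qed.

Lemma gauss_mul a b : G a * G b =
  jacobi a b * G (a + b) + (if (n %| a + b)%N then n%:R * Tp b (-1) else 0).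
Proof.
pose I s := \sum_x Tp a x * Tp b (s - x).
have convolution : G a * G b = \sum_s theta s * I s.
  rewrite /gauss mulr_suml.
  transitivity (\sum_x \sum_s Tp a x * Tp b (s - x) * theta s).
    apply: eq_bigr => x _; rewrite mulr_sumr (reindex_inj (addIr (- x))) /=.
    apply: eq_bigr => s _.
    have -> : theta s = theta x * theta (s - x) by rewrite -thetaD addrC subrK.
    ring.
  rewrite exchange_big; apply: eq_bigr => s _; rewrite /I mulr_sumr.
  by apply: eq_bigr => x _; rewrite mulrC.
have I_scale s : s != 0 -> I s = Tp (a + b) s * jacobi a b.
  move=> s_neq0; rewrite /I /jacobi mulr_sumr (reindex_inj (mulfI s_neq0)).
  by apply: eq_bigr => x _; rewrite -{2}[s]mulr1 -mulrBr !mchar_powM mchar_powD; ring.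
have I0 : I 0 = if (n %| a + b)%N then n%:R * Tp b (-1) else 0.
  rewrite /I; under eq_bigr do rewrite sub0r -mulN1r mchar_powM mulrCA -mchar_powD.
  by rewrite -mulr_sumr sum_mchar_pow; case: ifP; rewrite ?mulr0 // mulrC.
rewrite convolution (bigD1 0) //= theta0 mul1r I0 addrC; congr (_ + _).
rewrite /gauss mulr_sumr [RHS](bigD1 0) //= mchar_pow_at0 mul0r mulr0 add0r.
by apply: eq_bigr => s s_neq0; rewrite I_scale //; ring.
Qed.

Lemma gauss_trivial a : (n %| a)%N -> G a = -1.
Proof.
move=> n_dvd_a; rewrite /gauss.
have theta_shift x : Tp a x * theta x = theta x - (x == 0)%:R.
  have [->|x_neq0] := eqVneq x 0; first by rewrite mchar_pow_at0 mul0r theta0 subrr.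
  by rewrite mchar_pow_dvd // mul1r subr0.
under eq_bigr do rewrite theta_shift.
by rewrite sumrB sum_theta (eq_bigr _ (fun x _ => esym (mulr1 _))) sum_indicator sub0r.
Qed.

Lemma jacobi_inverse a b : ~~ (n %| b)%N -> (n %| a + b)%N -> jacobi a b = - Tp b (-1).
Proof.
move=> n_ndvd_b n_dvd_ab; rewrite /jacobi.
have summand_eq x : Tp a x * Tp b (1 - x) = Tp b (x^-1 - 1) - (x == 0)%:R * Tp b (-1).
  have [->|x_neq0] := eqVneq x 0.
    by rewrite mchar_pow_at0 mul0r mul1r invr0 sub0r subrr.
  have -> : x^-1 - 1 = x^-1 * (1 - x) by rewrite mulrBr mulr1 mulVf.
  rewrite mul0r subr0 mchar_powM; congr (_ * _).
  apply: (mulIf (mchar_pow_neq0 b x_neq0)).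
  by rewrite -!mchar_powM mulVf // mchar_pow_at1 -mchar_powD mchar_pow_dvd.
under eq_bigr do rewrite summand_eq.
rewrite sumrB sum_indicator (reindex_inj invr_inj) (reindex_inj (addIr 1)) /=.
under eq_bigr do rewrite invrK addrK.
by rewrite sum_mchar_pow (negbTE n_ndvd_b) sub0r.
Qed.

Lemma gauss_mul_inverse a b :
  ~~ (n %| a)%N -> (n %| a + b)%N -> G a * G b = q%:R * Tp a (-1).
Proof.
move=> n_ndvd_a n_dvd_ab.
have n_ndvd_b : ~~ (n %| b)%N by apply: contra n_ndvd_a => /(dvdn_addl a) <-.
rewrite gauss_mul n_dvd_ab jacobi_inverse // gauss_trivial // natr_card.
have -> : Tp b (-1) = Tp a (-1).
  rewrite -[Tp b _]mul1r -(mchar_pow_sqr_neg1 a) -mulrA -mchar_powD.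
  by rewrite (mchar_pow_dvd n_dvd_ab) ?mulr1 // oppr_eq0 oner_eq0.
ring.
Qed.

Lemma gauss_neq0 a : G a != 0.
Proof.
have [n_dvd_a|n_ndvd_a] := boolP (n %| a)%N.
  by rewrite gauss_trivial // oppr_eq0 oner_eq0.
have n_dvd_ab : (n %| a + n.-1 * a)%N.
  by rewrite -mulSn prednK ?card_pred_gt0 // dvdn_mulr.
have := gauss_mul_inverse n_ndvd_a n_dvd_ab; apply: contra_eqN => /eqP->.
by rewrite mul0r eq_sym mulf_neq0 ?natr_card_neq0 ?mchar_pow_neq0 ?oppr_eq0 ?oner_eq0.
Qed.

Lemma gauss_mul_jacobi a b :
  ~~ (n %| a + b)%N -> G a * G b = jacobi a b * G (a + b).
Proof. by move=> n_ndvd_ab; rewrite gauss_mul (negbTE n_ndvd_ab) addr0. Qed.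

Lemma jacobiC a b : jacobi a b = jacobi b a.
Proof.
rewrite /jacobi (reindex_inj (inv_inj (subKr 1))) /=.
by apply: eq_bigr => x _; rewrite subKr mulrC.
Qed.

Lemma gauss_addmul a k : G (a + k * n) = G a.
Proof. by apply: eq_bigr => x _; rewrite mchar_pow_addmul. Qed.

Lemma jacobi_addmul a b k : jacobi a (b + k * n) = jacobi a b.
Proof. by apply: eq_bigr => x _; rewrite mchar_pow_addmul. Qed.

Lemma sum_jacobi_mchar_pow a y : y != 0 ->
  \sum_(s < n) jacobi a s * Tp s y = n%:R * Tp a (1 - y^-1).
Proof.
move=> y_neq0; under eq_bigr do rewrite /jacobi mulr_suml.
rewrite exchange_big /=.
have inner x : \sum_(s < n) Tp a x * Tp s (1 - x) * Tp s y
    = (x == 1 - y^-1)%:R * (n%:R * Tp a x).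
  under eq_bigr do rewrite -mulrA -mchar_powM.
  rewrite -mulr_sumr.
  have solve : ((1 - x) * y == 1) = (x == 1 - y^-1).
    apply/eqP/eqP => [xy_eq1|->]; last by rewrite opprB addrC subrK mulVf.
    have <- : 1 - x = y^-1 by rewrite -(mulfK y_neq0 (1 - x)) xy_eq1 mul1r.
    by rewrite opprB addrC subrK.
  have [y0|xy_neq0] := eqVneq ((1 - x) * y) 0.
    move: solve; rewrite y0 eq_sym oner_eq0 => <-.
    by rewrite mul0r big1 ?mulr0 // => s; rewrite mchar_pow_at0.
  rewrite sum_mchar_pows // solve.
  by case: (x == _); rewrite ?mulr0 ?mul0r // mul1r mulrC.
by under eq_bigr do rewrite inner; rewrite sum_indicator.
Qed.

Lemma jacobi_trivial a b : ~~ (n %| a)%N -> (n %| b)%N -> jacobi a b = -1.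
Proof.
move=> n_ndvd_a n_dvd_b; rewrite /jacobi.
have summand_eq x : Tp a x * Tp b (1 - x) = Tp a x - (x == 1)%:R * Tp a x.
  have [->|x_neq1] := eqVneq x 1.
    by rewrite subrr mchar_pow_at0 mulr0 mul1r subrr.
  by rewrite (mchar_pow_dvd n_dvd_b) ?mulr1 ?mul0r ?subr0 // subr_eq0 eq_sym.
under eq_bigr do rewrite summand_eq.
by rewrite sumrB sum_indicator mchar_pow_at1 sum_mchar_pow (negbTE n_ndvd_a) sub0r.
Qed.

(** * The quadratic character *)

Hypothesis Hodd : odd p.
Let h := n./2.

Lemma n_double : n = (h + h)%N.
Proof.
have odd_q : odd #|F| by rewrite (card_pprimeChar HpF) oddX Hodd orbT.
have odd_n : odd n = false by move: odd_q; rewrite {1}cardF_pred /= => /negbTE.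
by rewrite addnn -{1}(odd_double_half n) odd_n.
Qed.

Lemma two_neq0 : (2%:R : F) != 0.
Proof.
rewrite -(dvdn_pcharf HpF); apply: contraL Hodd => /dvdn_leq le_p2.
by have /eqP-> : p == 2%N by rewrite eqn_leq le_p2 // prime_gt1.
Qed.

Lemma four_neq0 : (4 : F) != 0.
Proof. by rewrite (_ : 4 = 2%:R * 2%:R) ?mulf_neq0 ?two_neq0 // -natrM. Qed.

Lemma half_gt0 : (0 < h)%N.
Proof. by have := card_pred_gt0; rewrite n_double addn_gt0 orbb. Qed.

Lemma dvdn_double j : (j < n)%N -> (n %| j + j)%N = (j == 0%N) || (j == h).
Proof.
rewrite n_double !addnn -!mul2n dvdn_pmul2l // => lt_j_2h.
apply/dvdnP/orP => [[k j_eq]|[]/eqP->]; [|by exists 0%N|by exists 1%N; rewrite mul1n].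
move: lt_j_2h; rewrite j_eq ltn_pmul2r ?half_gt0 //.
by case: k {j_eq} => [|[|]] // _; [left | right]; rewrite ?mul0n ?mul1n.
Qed.

Lemma mchar_pow_half_sqr u : u != 0 -> Tp h u * Tp h u = 1.
Proof. by move=> u_neq0; rewrite -mchar_powD -n_double mchar_pow_dvd. Qed.

Lemma mchar_pow_halfV u : Tp h u^-1 = Tp h u.
Proof.
have [->|u_neq0] := eqVneq u 0; first by rewrite invr0.
apply: (mulIf (mchar_pow_neq0 h u_neq0)).
by rewrite -mchar_powM mulVf // mchar_pow_at1 mchar_pow_half_sqr.
Qed.

Lemma count_sqrt u : u != 0 -> \sum_(s : F) (s * s == u)%:R = 1 + Tp h u :> algC.
Proof.
move=> u_neq0; under eq_bigr do rewrite (mchar_indicator _ u_neq0).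
rewrite -mulr_sumr exchange_big /=.
under eq_bigr => j _ do rewrite -mulr_suml.
under eq_bigr => j _ do under eq_bigr do rewrite mchar_powM -mchar_powD.
have split_sum (j : 'I_n) : (\sum_s Tp (j + j) s) * Tp j u^-1
    = n%:R * (((j : nat) == 0%N)%:R * Tp j u^-1 + ((j : nat) == h)%:R * Tp j u^-1).
  rewrite sum_mchar_pow dvdn_double //.
  have [->|j_neq0] := eqVneq (j : nat) 0%N.
    by rewrite eq_sym gtn_eqF ?half_gt0 ?mul0r ?addr0 ?mul1r.
  by case: eqP; rewrite /= ?mul0r ?mul1r ?add0r ?mulr0.
under eq_bigr do rewrite split_sum.
rewrite -mulr_sumr mulrA mulVf ?natr_card_pred_neq0 // mul1r big_split /=.
rewrite !(sum_ord_indicator (fun j => Tp j u^-1)) ?card_pred_gt0 //; last first.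
  by rewrite n_double -addn1 leq_add2l half_gt0.
by rewrite mchar_pow_dvd ?dvdn0 ?invr_eq0 // mchar_pow_halfV.
Qed.

Lemma sum_sqr (f : F -> algC) : \sum_s f (s * s) = \sum_u (1 + Tp h u) * f u.
Proof.
transitivity (\sum_s \sum_u (u == s * s)%:R * f u).
  by apply: eq_bigr => s _; rewrite sum_indicator.
rewrite exchange_big; apply: eq_bigr => u _; rewrite -mulr_suml; congr (_ * _).
under eq_bigr do rewrite eq_sym.
have [->|u_neq0] := eqVneq u 0; last exact: count_sqrt.
under eq_bigr do rewrite mulf_eq0 orbb -[(_ == 0)%:R]mulr1.
by rewrite sum_indicator mchar_pow_at0 addr0.
Qed.

(* Substituting x = (1 + s) / 2 turns 4 x (1 - x) into 1 - s^2. *)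
Lemma jacobi_duplication a : ~~ (n %| a)%N -> Tp a 4 * jacobi a a = jacobi h a.
Proof.
move=> n_ndvd_a; rewrite /jacobi mulr_sumr.
have half_neq0 : (2%:R : F)^-1 != 0 by rewrite invr_eq0 two_neq0.
have affine_inj : injective (fun s : F => (1 + s) / 2%:R).
  by move=> x y /(mulIf half_neq0) /addrI.
rewrite (reindex_inj affine_inj) /=.
have quad s : Tp a 4 * (Tp a ((1 + s) / 2%:R) * Tp a (1 - (1 + s) / 2%:R))
    = Tp a (1 - s * s).
  by rewrite -!mchar_powM; congr (Tp a _); field; exact: two_neq0.
under eq_bigr do rewrite quad.
rewrite (sum_sqr (fun u => Tp a (1 - u))); under [LHS]eq_bigr do rewrite mulrDl mul1r.
rewrite big_split /= (reindex_inj (inv_inj (subKr 1))) /=.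
by under eq_bigr do rewrite subKr; rewrite sum_mchar_pow (negbTE n_ndvd_a) add0r.
Qed.

Lemma gauss_duplication a :
  ~~ (n %| a + a)%N -> Tp a 4 * G a * G (a + h) = G h * G (a + a).
Proof.
move=> n_ndvd_2a.
have n_ndvd_a : ~~ (n %| a)%N by apply: contra n_ndvd_2a => n_dvd_a; rewrite dvdn_add.
have n_ndvd_ah : ~~ (n %| a + h)%N.
  apply: contra n_ndvd_2a => n_dvd_ah.
  have : (n %| (a + h) + (a + h))%N by rewrite dvdn_add.
  by rewrite addnACA -n_double dvdn_addl.
apply: (mulfI (gauss_neq0 a)).
transitivity (Tp a 4 * (G a * G a) * G (a + h)); first by ring.
rewrite gauss_mul_jacobi // mulrA jacobi_duplication // jacobiC.
by rewrite mulrAC -gauss_mul_jacobi //; ring.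
Qed.

Lemma gauss_quadruplication j : ~~ (n %| 4 * j)%N ->
  Tp j 4 * Tp (j + j) 4 * G j * G (j + h) * G (j + j + h) = G h ^+ 2 * G (4 * j).
Proof.
have four_j : (4 * j = (j + j) + (j + j))%N by lia.
rewrite four_j => n_ndvd_4j.
have n_ndvd_2j : ~~ (n %| j + j)%N by apply: contra n_ndvd_4j => ?; rewrite dvdn_add.
transitivity (Tp (j + j) 4 * (Tp j 4 * G j * G (j + h)) * G (j + j + h)); first by ring.
rewrite gauss_duplication //.
transitivity (G h * (Tp (j + j) 4 * G (j + j) * G (j + j + h))); first by ring.
by rewrite gauss_duplication // expr2 mulrA.
Qed.

(** * The case q = 1 mod 4 *)

Hypothesis Hq : (#|F| %% 4 = 1)%N.
Let t := (n %/ 4)%N.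

Lemma card_pred_quartic : n = (4 * t)%N.
Proof.
have n_eq : n = (#|F| %/ 4 * 4)%N by rewrite {1}(divn_eq #|F| 4) Hq addnK.
by rewrite /t n_eq mulnK // mulnC.
Qed.

Lemma quarter_gt0 : (0 < t)%N.
Proof. by have := card_pred_gt0; rewrite card_pred_quartic muln_gt0. Qed.

Lemma half_quarter : h = (2 * t)%N.
Proof. by rewrite /h -divn2 card_pred_quartic -[4%N]/(2 * 2)%N -mulnA mulKn. Qed.

Lemma quartic_ndvd k : (0 < k < 4 * t)%N -> ~~ (n %| k)%N.
Proof. by case/andP=> k_gt0 lt_k; rewrite card_pred_quartic gtnNdvd. Qed.

Lemma mchar_pow_half_neg1 : Tp h (-1) = 1.
Proof. by rewrite half_quarter mul2n -addnn mchar_powD mchar_pow_sqr_neg1. Qed.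

Lemma half_ndvd : ~~ (n %| h)%N.
Proof. by rewrite quartic_ndvd // half_quarter; have := quarter_gt0; lia. Qed.

Lemma gauss_half_sqr : G h ^+ 2 = q%:R.
Proof.
rewrite expr2 gauss_mul_inverse -?n_double ?half_ndvd //.
by rewrite mchar_pow_half_neg1 mulr1.
Qed.

Lemma gauss_quarter_mul : G t * G (t + h) = q%:R * Tp t (-1).
Proof.
have t_gt0 := quarter_gt0.
apply: gauss_mul_inverse; first by rewrite quartic_ndvd //; lia.
by rewrite half_quarter card_pred_quartic; apply/dvdnP; exists 1%N; lia.
Qed.

Lemma mchar_pow_quarter_four : Tp t 4 * Tp t (-1) = 1.
Proof.
have tt_half : (t + t)%N = h by rewrite half_quarter; lia.
apply: (mulfI natr_card_neq0); rewrite mulr1 mulrCA -gauss_quarter_mul mulrA.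
by rewrite gauss_duplication tt_half ?half_ndvd // -expr2 gauss_half_sqr.
Qed.

Definition summand (l : F) (j : nat) :=
  G j * G (t + j) ^+ 2 * G (2 * t + j) / G (4 * j) * Tp (4 * j) (4 * l).

Lemma summand_generic l j : l != 0 -> ~~ (n %| 4 * j)%N ->
  summand l j = q%:R * Tp t (-1) * jacobi h (j + t) * Tp (j + t) (l ^+ 4).
Proof.
move=> l_neq0 n_ndvd_4j.
have n_ndvd_2jt : ~~ (n %| (j + t) + (j + t))%N.
  apply: contra n_ndvd_4j => n_dvd; rewrite -(dvdn_addl (4 * j) (dvdnn n)).
  have -> : (4 * j + n = (j + t + (j + t)) + (j + t + (j + t)))%N.
    by rewrite card_pred_quartic; lia.
  by rewrite dvdn_add.
have n_ndvd_jt : ~~ (n %| j + t)%N by apply: contra n_ndvd_2jt => ?; rewrite dvdn_add.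
have Gjt_sqr : G (t + j) ^+ 2 = jacobi h (j + t) / Tp (j + t) 4 * G (j + j + h).
  rewrite addnC expr2 gauss_mul_jacobi // -jacobi_duplication //.
  rewrite (mulrC (Tp _ 4)) mulfK ?mchar_pow_neq0 ?four_neq0 //; congr (_ * G _).
  by rewrite half_quarter; lia.
have G4j : G (4 * j) = Tp j 4 * Tp (j + j) 4 * G j * G (j + h) * G (j + j + h) / q%:R.
  by rewrite gauss_quadruplication // gauss_half_sqr mulrC mulKf ?natr_card_neq0.
have T4j : Tp (4 * j) 4 = Tp j 4 * Tp (j + j) 4 * Tp (j + t) 4 * Tp t (-1).
  rewrite -!mchar_powD -[LHS]mulr1 -mchar_pow_quarter_four mulrA -mchar_powD.
  by congr (Tp _ _ * _); lia.
have Tl : Tp (4 * j) l = Tp (j + t) (l ^+ 4).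
  rewrite [RHS]mchar_powD -!mchar_powX // -card_pred_quartic.
  by rewrite (mchar_pow_dvd (dvdnn n)) ?mulr1.
rewrite /summand Gjt_sqr G4j mchar_powM T4j Tl (_ : (2 * t + j = j + h)%N); last first.
  by rewrite half_quarter; lia.
field.
by rewrite !mchar_pow_neq0 ?four_neq0 ?gauss_neq0 ?natr_card_neq0.
Qed.

Lemma mchar_pow_expr4_dvd l k : l != 0 -> (n %| 4 * k)%N -> Tp k (l ^+ 4) = 1.
Proof. by move=> l_neq0 n_dvd; rewrite -mchar_powX // mchar_pow_dvd. Qed.

Lemma summand_at0 l : l != 0 ->
  summand l 0 = q%:R * Tp t (-1) * jacobi h (0 + t) * Tp (0 + t) (l ^+ 4).
Proof.
move=> l_neq0; have t_gt0 := quarter_gt0; have h_eq := half_quarter.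
rewrite /summand !addn0 muln0 gauss_trivial ?dvdn0 //.
rewrite mchar_pow_dvd ?dvdn0 ?mulf_neq0 ?four_neq0 // -h_eq add0n.
rewrite mchar_pow_expr4_dvd // ?card_pred_quartic // mulr1.
have G_ht : G h * G t = jacobi h t * G (t + h).
  by rewrite gauss_mul_jacobi ?quartic_ndvd 1?addnC //; lia.
transitivity (G t * (G h * G t)); first by field.
by rewrite G_ht mulrCA gauss_quarter_mul; ring.
Qed.

Lemma summand_at_quarter l : l != 0 ->
  summand l t = q%:R * Tp t (-1) * jacobi h (t + t) * Tp (t + t) (l ^+ 4)
                + q%:R * Tp t (-1) * (1 - q%:R).
Proof.
move=> l_neq0; have t_gt0 := quarter_gt0; have h_eq := half_quarter.
have tt_half : (t + t)%N = h by lia.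
rewrite /summand tt_half -h_eq -card_pred_quartic (addnC h t).
rewrite (gauss_trivial (dvdnn n)) (mchar_pow_dvd (dvdnn n)) ?mulf_neq0 ?four_neq0 //.
have n_dvd_4h : (n %| 4 * h)%N.
  by rewrite h_eq card_pred_quartic; apply/dvdnP; exists 2%N; lia.
rewrite mchar_pow_expr4_dvd // jacobi_inverse ?half_ndvd -?n_double //.
rewrite mchar_pow_half_neg1.
transitivity (- G h ^+ 2 * (G t * G (t + h))); first by field.
by rewrite gauss_half_sqr gauss_quarter_mul; ring.
Qed.

Lemma summand_at_half l : l != 0 ->
  summand l h = q%:R * Tp t (-1) * jacobi h (h + t) * Tp (h + t) (l ^+ 4).
Proof.
move=> l_neq0; have t_gt0 := quarter_gt0; have h_eq := half_quarter.
have n_eq := card_pred_quartic.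
have n_dvd_2n : (n %| 2 * n)%N by rewrite dvdn_mull.
rewrite /summand -h_eq -n_double (_ : (4 * h = 2 * n)%N); last by lia.
rewrite (gauss_trivial n_dvd_2n) (gauss_trivial (dvdnn n)) (mchar_pow_dvd n_dvd_2n).
  rewrite mchar_pow_expr4_dvd //; last by rewrite n_eq; apply/dvdnP; exists 3%N; lia.
  have G_hth : G h * G (t + h) = jacobi h (h + t) * G t.
    have idx : (h + (t + h) = t + 1 * n)%N by lia.
    rewrite gauss_mul_jacobi idx ?gauss_addmul ?(addnC t h) //.
    by rewrite dvdn_addl ?dvdn_mull // quartic_ndvd //; lia.
  transitivity ((G h * G (t + h)) * G (t + h)); first by field.
  by rewrite G_hth -mulrA gauss_quarter_mul; ring.
by rewrite mulf_neq0 ?four_neq0.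
Qed.

Lemma summand_at_three_quarters l : l != 0 ->
  summand l (t + h) = q%:R * Tp t (-1) * jacobi h (t + h + t) * Tp (t + h + t) (l ^+ 4).
Proof.
move=> l_neq0; have t_gt0 := quarter_gt0; have h_eq := half_quarter.
have n_eq := card_pred_quartic.
have idx1 : (t + (t + h) = n)%N by lia.
have idx2 : (t + h + t = n)%N by lia.
have idx3 : (2 * t + (t + h) = t + 1 * n)%N by lia.
have idx4 : (4 * (t + h) = 3 * n)%N by lia.
have n_dvd_3n : (n %| 3 * n)%N by rewrite dvdn_mull.
rewrite /summand idx1 idx2 idx3 idx4 gauss_addmul.
rewrite (gauss_trivial n_dvd_3n) (gauss_trivial (dvdnn n)) (mchar_pow_dvd n_dvd_3n).
  rewrite (mchar_pow_dvd (dvdnn n)) ?expf_neq0 // jacobi_trivial ?half_ndvd //.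
  transitivity (- (G t * G (t + h))); first by field.
  by rewrite gauss_quarter_mul; ring.
by rewrite mulf_neq0 ?four_neq0.
Qed.

Lemma summand_eq l j : l != 0 -> (j < n)%N ->
  summand l j = q%:R * Tp t (-1) * jacobi h (j + t) * Tp (j + t) (l ^+ 4)
                + (j == t)%:R * (q%:R * Tp t (-1) * (1 - q%:R)).
Proof.
move=> l_neq0 lt_jn; have t_gt0 := quarter_gt0; have h_eq := half_quarter.
have [n_dvd_4j|n_ndvd_4j] := boolP (n %| 4 * j)%N; last first.
  have j_neq_t : (j == t) = false.
    by apply: contraNF n_ndvd_4j => /eqP->; rewrite card_pred_quartic.
  by rewrite summand_generic // j_neq_t mul0r addr0.
have [k j_eq] : exists k, j = (k * t)%N.
  by apply/dvdnP; move: n_dvd_4j; rewrite card_pred_quartic dvdn_pmul2l.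
have lt_k4 : (k < 4)%N.
  by move: lt_jn; rewrite card_pred_quartic j_eq ltn_pmul2r // mulnC.
move: lt_k4; rewrite {}j_eq; case: k => [|[|[|[|k]]]] // _.
- by rewrite summand_at0 // eq_sym gtn_eqF // mul0r addr0.
- by rewrite mul1n summand_at_quarter // eqxx mul1r.
- rewrite (_ : (2 * t)%N = h) // summand_at_half //.
  by rewrite (_ : (h == t) = false) ?mul0r ?addr0 //; apply/negbTE; lia.
- rewrite (_ : (3 * t)%N = t + h)%N; last by lia.
  rewrite summand_at_three_quarters //.
  by rewrite (_ : (t + h == t) = false) ?mul0r ?addr0 //; apply/negbTE; lia.
Qed.

Lemma mchar_pow_half_1subV_pow4 l : l != 0 -> Tp h (1 - (l ^+ 4)^-1) = Tp h (1 - l ^+ 4).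
Proof.
move=> l_neq0; have l4_neq0 : l ^+ 4 != 0 by rewrite expf_neq0.
have -> : 1 - (l ^+ 4)^-1 = -1 * ((1 - l ^+ 4) * ((l ^+ 2)^-1 * (l ^+ 2)^-1)).
  by rewrite -invfM -exprD mulrBl mul1r mulfV // mulN1r opprB.
rewrite !mchar_powM mchar_pow_half_neg1 mchar_pow_half_sqr ?invr_eq0 ?expf_neq0 //.
by rewrite mul1r mulr1.
Qed.

Lemma sum_summand l : l != 0 ->
  \sum_(j < n) summand l j = n%:R * q%:R * Tp t (-1) * (Tp h (1 - l ^+ 4) - 1).
Proof.
move=> l_neq0; have lt_tn : (t < n)%N.
  by rewrite card_pred_quartic -[X in (X < _)%N]mul1n ltn_pmul2r ?quarter_gt0.
under eq_bigr do rewrite summand_eq // -[_ * Tp _ (l ^+ 4)]mulrA.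
rewrite big_split /= (sum_ord_indicator (fun=> q%:R * Tp t (-1) * (1 - q%:R))) //.
rewrite -mulr_sumr (@sum_ord_shift _ _ t (fun s => jacobi h s * Tp s (l ^+ 4))).
  rewrite sum_jacobi_mchar_pow ?expf_neq0 // mchar_pow_half_1subV_pow4 // natr_card; ring.
by move=> s; rewrite -[n]mul1n jacobi_addmul mchar_pow_addmul.
Qed.
End GaussSums.

Unset Implicit Arguments.

Theorem proposition4p4 (F : finFieldType) (p : nat) (zeta : algC)
    (T : F -> algC) (lambda : F)
    (Hp : prime p) (Hodd : odd p) (HpF : p \in [pchar F])
    (Hq : (#|F| %% 4 = 1)%N)
    (Hzeta : p.-primitive_root zeta)
    (HT : mchar_generator T)
    (Hlam : lambda != 0) :
  let q := #|F| in
  let t := ((q - 1) %/ 4)%N in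
  let g := gauss p zeta in
  let Tp := mchar_pow T in
  (12 / (q - 1)%:R) *
    \sum_(j < q - 1)
      (g (Tp j) * g (Tp (t + j)%N) ^+ 2 * g (Tp (2 * t + j)%N) / g (Tp (4 * j)%N))
      * Tp (4 * j)%N (4 * lambda)
  = 12 * q%:R * Tp t (-1) * (Tp (2 * t)%N (1 - lambda ^+ 4) - 1).
Proof.
move=> q t g Tp; rewrite /q /t /g /Tp.
have := sum_summand HT Hp HpF Hzeta Hodd Hq Hlam.
rewrite (half_quarter Hq) /summand => ->.
by field; exact: natr_card_pred_neq0.
Qed.
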